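(* Let $\mathbb{E}$ be a finitely complete category, $\Sigma$ a point-congruous class of split epimorphisms, and suppose $\mathbb{E}$ is a $\Sigma$-Mal'tsev category. Let reflexive graphs $(d_0,d_1\colon X_1\rightrightarrows X_0,s_0)$ and $(d_0',d_1'\colon X_1'\rightrightarrows X_0',s_0')$ be given, together with a split epimorphism of reflexive graphs, i.e. split epimorphisms $(g_1,t_1)\colon X_1\rightleftarrows X_1'$ and $(g_0,t_0)\colon X_0\rightleftarrows X_0'$ such that $g_1,g_0$ and $t_1,t_0$ each commute with $d_0$, $d_1$ and $s_0$. Suppose $(g_0,t_0)\in\Sigma$. If the square $g_0d_0=d_0'g_1$ is a pullback, then the square $g_0d_1=d_1'g_1$ is a pullback as well.
   Context: A split epimorphism is a pair $(f,s)$ with $fs=1$. A class $\Sigma$ of split epimorphisms is fibrational if it contains all split epimorphisms $(f,s)$ with $f$ invertible and is stable under pullback along any morphism; it is point-congruous if moreover the full subcategory $\Sigma(\mathbb{E})$ of the category $\mathrm{Pt}(\mathbb{E})$ of split epimorphisms (with commuting squares as morphisms) is closed under finite limits in $\mathrm{Pt}(\mathbb{E})$. A pair of morphisms with common codomain $Z$ is jointly extremally epic if it factors jointly through no non-invertible monomorphism into $Z$. $\mathbb{E}$ is $\Sigma$-Mal'tsev if for every split epimorphism $(f,s)\colon X\rightleftarrows Y$ in $\Sigma$ and every split epimorphism $(g,t)$ with $g\colon Y'\to Y$, letting $X'=Y'\times_YX$, $s'=(1_{Y'},sg)$, $\bar t=(tf,1_X)$, the pair $(s',\bar t)$ is jointly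 extremally epic. *)

From mathcomp Require Import ssreflect ssrfun ssrbool eqtype choice fintype.
From Stdlib Require Import ProofIrrelevance.

Set Implicit Arguments.
Unset Strict Implicit.
Unset Printing Implicit Defensive.

Record Category := {
  Ob :> Type;
  Hom : Ob -> Ob -> Type;
  idm : forall X, Hom X X;
  comp : forall X Y Z, Hom Y Z -> Hom X Y -> Hom X Z;
  comp_id_l : forall X Y (f : Hom X Y), comp (idm Y) f = f;
  comp_id_r : forall X Y (f : Hom X Y), comp f (idm X) = f;
  comp_assoc : forall X Y Z W (h : Hom Z W) (g : Hom Y Z) (f : Hom X Y),
      comp h (comp g f) = comp (comp h g) f
}.
Arguments Hom {c} _ _.
Arguments idm {c} _.
Arguments comp {c X Y Z} _ _.

Notation "g ∘ f" := (comp g f) (at level 40, left associativity).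

Section Basics.
Variable C : Category.

Definition is_iso (X Y : C) (f : Hom X Y) : Prop :=
  exists g : Hom Y X, g ∘ f = idm X /\ f ∘ g = idm Y.

Definition is_mono (M Z : C) (m : Hom M Z) : Prop :=
  forall (W : C) (u v : Hom W M), m ∘ u = m ∘ v -> u = v.

Definition is_pullback (A B Z P : C) (f : Hom A Z) (g : Hom B Z)
    (p1 : Hom P A) (p2 : Hom P B) : Prop :=
  f ∘ p1 = g ∘ p2 /\
  forall (Q : C) (q1 : Hom Q A) (q2 : Hom Q B), f ∘ q1 = g ∘ q2 ->
    exists u : Hom Q P, (p1 ∘ u = q1 /\ p2 ∘ u = q2) /\
      forall v : Hom Q P, p1 ∘ v = q1 -> p2 ∘ v = q2 -> v = u.

(** Finite diagrams: diagrams indexed by a finite graph (finite limits are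
    exactly limits of such diagrams). *)
Record FinDiagram := {
  dJ : finType;
  dE : finType;
  dsrc : dE -> dJ;
  dtgt : dE -> dJ;
  dob : dJ -> Ob C;
  dmap : forall e : dE, Hom (dob (dsrc e)) (dob (dtgt e))
}.

Arguments dob : clear implicits.
Arguments dmap : clear implicits.
Arguments dsrc : clear implicits.
Arguments dtgt : clear implicits.

Definition is_cone (D : FinDiagram) (L : C) (legs : forall j, Hom L (dob D j)) : Prop :=
  forall e : dE D, dmap D e ∘ legs (dsrc D e) = legs (dtgt D e).

Definition is_limit (D : FinDiagram) (L : C) (legs : forall j, Hom L (dob D j)) : Prop :=
  is_cone legs /\
  forall (M : C) (m : forall j, Hom M (dob D j)), is_cone m ->
    exists u : Hom M L, (forall j, legs j ∘ u = m j) /\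
      forall v : Hom M L, (forall j, legs j ∘ v = m j) -> v = u.

Definition finitely_complete : Prop :=
  forall D : FinDiagram, exists (L : C) (legs : forall j, Hom L (dob D j)),
    is_limit legs.

Definition closed_under_finite_limits (P : C -> Prop) : Prop :=
  forall (D : FinDiagram) (L : C) (legs : forall j, Hom L (dob D j)),
    (forall j, P (dob D j)) -> is_limit legs -> P L.

Definition jointly_extremally_epic (A B Z : C) (a : Hom A Z) (b : Hom B Z) : Prop :=
  forall (M : C) (m : Hom M Z) (a' : Hom A M) (b' : Hom B M),
    is_mono m -> m ∘ a' = a -> m ∘ b' = b -> is_iso m.

End Basics.

Record Point (C : Category) := {
  pt_dom : Ob C;
  pt_cod : Ob C;
  pt_f : Hom pt_dom pt_cod;
  pt_s : Hom pt_cod pt_dom;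
  pt_sec : pt_f ∘ pt_s = idm pt_cod
}.
Arguments pt_dom {C} _.
Arguments pt_cod {C} _.
Arguments pt_f {C} _.
Arguments pt_s {C} _.
Arguments pt_sec {C} _.
Arguments Build_Point {C pt_dom pt_cod} pt_f pt_s pt_sec.

Record PtHom (C : Category) (p q : Point C) := {
  ph_top : Hom (pt_dom p) (pt_dom q);
  ph_bot : Hom (pt_cod p) (pt_cod q);
  ph_f : pt_f q ∘ ph_top = ph_bot ∘ pt_f p;
  ph_s : ph_top ∘ pt_s p = pt_s q ∘ ph_bot
}.
Arguments ph_top {C p q} _.
Arguments ph_bot {C p q} _.

Section Pt.
Variable C : Category.

Lemma PtHom_eq (p q : Point C) (a b : PtHom p q) :
  ph_top a = ph_top b -> ph_bot a = ph_bot b -> a = b.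
Proof.
case: a => t1 b1 f1 s1; case: b => t2 b2 f2 s2 /= E1 E2.
subst t2 b2. by rewrite (proof_irrelevance _ f1 f2) (proof_irrelevance _ s1 s2).
Qed.

Definition Pt_id (p : Point C) : PtHom p p.
Proof.
refine (@Build_PtHom C p p (idm _) (idm _) _ _).
- by rewrite comp_id_l comp_id_r.
- by rewrite comp_id_l comp_id_r.
Defined.

Definition Pt_comp (p q r : Point C) (b : PtHom q r) (a : PtHom p q) : PtHom p r.
Proof.
refine (@Build_PtHom C p r (ph_top b ∘ ph_top a) (ph_bot b ∘ ph_bot a) _ _).
- by rewrite comp_assoc (ph_f b) -comp_assoc (ph_f a) comp_assoc.
- by rewrite -comp_assoc (ph_s a) comp_assoc (ph_s b) -comp_assoc.
Defined.

Definition Pt : Category.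
Proof.
refine (@Build_Category (Point C) (@PtHom C) Pt_id Pt_comp _ _ _).
- by move=> X Y f; apply: PtHom_eq => /=; rewrite comp_id_l.
- by move=> X Y f; apply: PtHom_eq => /=; rewrite comp_id_r.
- by move=> X Y Z W h g f; apply: PtHom_eq => /=; rewrite comp_assoc.
Defined.

Definition fibrational (S : Point C -> Prop) : Prop :=
  (forall p : Point C, is_iso (pt_f p) -> S p) /\
  (forall (p q : Point C) (h : Hom (pt_cod q) (pt_cod p)) (k : Hom (pt_dom q) (pt_dom p)),
      S p -> is_pullback h (pt_f p) (pt_f q) k -> k ∘ pt_s q = pt_s p ∘ h -> S q).

Definition point_congruous (S : Point C -> Prop) : Prop :=
  fibrational S /\ @closed_under_finite_limits Pt S.

Definition sigma_maltsev (S : Point C -> Prop) : Prop :=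
  forall p : Point C, S p ->
  forall (Y' : C) (g : Hom Y' (pt_cod p)) (t : Hom (pt_cod p) Y'), g ∘ t = idm _ ->
  forall (X' : C) (pi1 : Hom X' Y') (pi2 : Hom X' (pt_dom p)),
    is_pullback g (pt_f p) pi1 pi2 ->
  forall (s' : Hom Y' X') (tb : Hom (pt_dom p) X'),
    pi1 ∘ s' = idm Y' -> pi2 ∘ s' = pt_s p ∘ g ->
    pi1 ∘ tb = t ∘ pt_f p -> pi2 ∘ tb = idm (pt_dom p) ->
    jointly_extremally_epic s' tb.

End Pt.

(* Let P be the pullback of d1' along g0 and phi = (g1, d1) : X1 -> P.  The
   arrows phi t1 and phi s0 are the pair (s', tbar) of the Sigma-Mal'tsev
   condition for the point (g0, t0) and the split epimorphism (d1', s0'), so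
   they are jointly extremally epic and phi is invertible once it is monic.
   For monicity take the kernel pair r1, r2 : R -> X1 of phi: it is the kernel
   pair in Pt of a morphism between two points over X1' that lie in Sigma (both
   are pullbacks of (g0, t0)), hence a point of Sigma itself.  Let N be the
   kernel pair of d0, split over X1' by (t1, t1), and X' = N x_{X1'} R.  Using
   X1 = X0 x_{X0'} X1', each r_i gives an arrow m_i : X' -> X1 with d0-part
   d0 r_i and g1-part g1 n1.  The arrows d1 m1 and d1 m2 agree on both arrows
   of the Mal'tsev pair into X', hence everywhere, and along the diagonal
   R -> X' this reads d0 r1 = d0 r2, so r1 = r2. *)

From mathcomp Require Import ssreflect ssrfun fintype.

Set Implicit Arguments.
Unset Strict Implicit.

Section Pullbacks.
Variable C : Category.

Lemma pullback_lift (A B Z P Q : C) (f : Hom A Z) (g : Hom B Z)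
    (p1 : Hom P A) (p2 : Hom P B) (q1 : Hom Q A) (q2 : Hom Q B) :
  is_pullback f g p1 p2 -> f ∘ q1 = g ∘ q2 ->
  exists u : Hom Q P, p1 ∘ u = q1 /\ p2 ∘ u = q2.
Proof. by case=> _ Hu E; case: (Hu Q q1 q2 E) => u [? _]; exists u. Qed.

Lemma pullback_jointly_mono (A B Z P W : C) (f : Hom A Z) (g : Hom B Z)
    (p1 : Hom P A) (p2 : Hom P B) (x y : Hom W P) :
  is_pullback f g p1 p2 -> p1 ∘ x = p1 ∘ y -> p2 ∘ x = p2 ∘ y -> x = y.
Proof.
case=> Hc Hu E1 E2.
have Hx : f ∘ (p1 ∘ x) = g ∘ (p2 ∘ x) by rewrite !comp_assoc Hc.
case: (Hu W _ _ Hx) => u [_ Hun].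
by rewrite (Hun x) // (Hun y).
Qed.

Lemma pullback_sym (A B Z P : C) (f : Hom A Z) (g : Hom B Z)
    (p1 : Hom P A) (p2 : Hom P B) :
  is_pullback f g p1 p2 -> is_pullback g f p2 p1.
Proof.
case=> Hc Hu; split=> // Q q1 q2 E.
case: (Hu Q q2 q1 (esym E)) => u [[E1 E2] Hun].
by exists u; split=> // v V1 V2; apply: Hun.
Qed.

Lemma pullback_id (Y : C) : is_pullback (idm Y) (idm Y) (idm Y) (idm Y).
Proof.
split=> // Q q1 q2; rewrite !comp_id_l => <-.
by exists q1; split=> [|v]; rewrite !comp_id_l.
Qed.

Lemma pullback_iso (A B Z P X : C) (f : Hom A Z) (g : Hom B Z)
    (p1 : Hom P A) (p2 : Hom P B) (phi : Hom X P) :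
  is_pullback f g p1 p2 -> is_iso phi -> is_pullback f g (p1 ∘ phi) (p2 ∘ phi).
Proof.
case=> Hc Hu [psi [Hpsi Hphi]]; split; first by rewrite !comp_assoc Hc.
move=> Q q1 q2 E; case: (Hu Q q1 q2 E) => w [[W1 W2] Wun].
have Hphi_w : phi ∘ (psi ∘ w) = w by rewrite comp_assoc Hphi comp_id_l.
exists (psi ∘ w); split; first by rewrite -!comp_assoc Hphi_w.
move=> v V1 V2; rewrite -(Wun (phi ∘ v)).
- by rewrite comp_assoc Hpsi comp_id_l.
- by rewrite comp_assoc.
- by rewrite comp_assoc.
Qed.

Definition cospan_ob (A B Z : C) (j : option bool) : C :=
  match j with None => Z | Some true => A | Some false => B end.

Definition cospan_diagram (A B Z : C) (f : Hom A Z) (g : Hom B Z) : FinDiagram C :=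
  @Build_FinDiagram C (option bool) bool Some (fun _ => None) (cospan_ob A B Z)
    (fun e => if e as e return Hom (cospan_ob A B Z (Some e)) Z then f else g).

Definition cospan_cone (A B Z P : C) (f : Hom A Z) (p1 : Hom P A) (p2 : Hom P B) :
    forall j, Hom P (cospan_ob A B Z j) :=
  fun j => match j with None => f ∘ p1 | Some true => p1 | Some false => p2 end.

Lemma limit_cospan_pullback (A B Z P : C) (f : Hom A Z) (g : Hom B Z)
    (legs : forall j, Hom P (cospan_ob A B Z j)) :
  is_limit (D := cospan_diagram f g) legs ->
  is_pullback f g (legs (Some true)) (legs (Some false)).
Proof.
case=> Hcone Hu; have [/= L1 L2] := (Hcone true, Hcone false).
split=> [|Q q1 q2 E]; first by rewrite L1 L2.
have Hq : is_cone (D := cospan_diagram f g) (cospan_cone f q1 q2) by case=> /=.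
case: (Hu Q _ Hq) => u [Hlegs Hun].
exists u; split; first by split; [exact: Hlegs (Some true) | exact: Hlegs (Some false)].
move=> v V1 V2; apply: Hun => -[[]|] //=.
by rewrite -L1 -comp_assoc V1.
Qed.

Lemma pullback_limit_cospan (A B Z P : C) (f : Hom A Z) (g : Hom B Z)
    (p1 : Hom P A) (p2 : Hom P B) :
  is_pullback f g p1 p2 -> is_limit (D := cospan_diagram f g) (cospan_cone f p1 p2).
Proof.
case=> Hc Hu; split=> [[] //=|M m Hm].
have [/= M1 M2] := (Hm true, Hm false).
have E : f ∘ m (Some true) = g ∘ m (Some false) by rewrite M1 M2.
case: (Hu M _ _ E) => u [[U1 U2] Hun].
exists u; split=> [[[]|]|v Hv] //=; first by rewrite -comp_assoc U1.
exact: Hun (Hv (Some true)) (Hv (Some false)).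
Qed.

Lemma pullback_exists (Hfc : finitely_complete C) (A B Z : C) (f : Hom A Z) (g : Hom B Z) :
  exists (P : C) (p1 : Hom P A) (p2 : Hom P B), is_pullback f g p1 p2.
Proof.
case: (Hfc (cospan_diagram f g)) => P [legs Hlim].
by exists P, (legs (Some true)), (legs (Some false)); apply: limit_cospan_pullback.
Qed.

Lemma closed_under_pullbacks (S : C -> Prop) (A B Z P : C) (f : Hom A Z) (g : Hom B Z)
    (p1 : Hom P A) (p2 : Hom P B) :
  closed_under_finite_limits S -> is_pullback f g p1 p2 -> S A -> S B -> S Z -> S P.
Proof.
move=> HS Hpb SA SB SZ.
by apply: HS (pullback_limit_cospan Hpb) => -[[]|].
Qed.

Definition parallel_diagram (A Z : C) (h1 h2 : Hom A Z) : FinDiagram C :=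
  @Build_FinDiagram C bool bool (fun _ => true) (fun _ => false)
    (fun j => if j then A else Z) (fun e => if e then h1 else h2).

Lemma equalizer_exists (Hfc : finitely_complete C) (A Z : C) (h1 h2 : Hom A Z) :
  exists (E : C) (e : Hom E A), h1 ∘ e = h2 ∘ e /\ is_mono e /\
    forall (Q : C) (q : Hom Q A), h1 ∘ q = h2 ∘ q -> exists u, e ∘ u = q.
Proof.
case: (Hfc (parallel_diagram h1 h2)) => E [legs [Hcone Hu]].
have [/= K1 K2] := (Hcone true, Hcone false).
exists E, (legs true); split; first by rewrite K1 K2.
pose fork (Q : C) (q : Hom Q A) : forall j, Hom Q (if j then A else Z) :=
  fun j => if j as j return Hom Q (if j then A else Z) then q else h1 ∘ q.
have Hfork Q q : h1 ∘ q = h2 ∘ q -> is_cone (D := parallel_diagram h1 h2) (fork Q q).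
  by move=> Eq [] //=; rewrite Eq.
split=> [W x y Exy | Q q Eq].
- have Hx : h1 ∘ (legs true ∘ x) = h2 ∘ (legs true ∘ x) by rewrite !comp_assoc K1 K2.
  case: (Hu W _ (Hfork _ _ Hx)) => u [_ Hun].
  rewrite (Hun x); last by case=> //=; rewrite comp_assoc K1.
  rewrite (Hun y) // => -[] /=; first exact: esym Exy.
  by rewrite -K1 -!comp_assoc; congr (h1 ∘ _); exact: esym Exy.
- by case: (Hu Q _ (Hfork _ _ Eq)) => u [Hlegs _]; exists u; exact: Hlegs true.
Qed.

Lemma jointly_extremally_epic_eq (Hfc : finitely_complete C) (X Y1 Y2 Z : C)
    (a : Hom Y1 X) (b : Hom Y2 X) (h1 h2 : Hom X Z) :
  jointly_extremally_epic a b -> h1 ∘ a = h2 ∘ a -> h1 ∘ b = h2 ∘ b -> h1 = h2.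
Proof.
move=> J Ea Eb.
case: (equalizer_exists Hfc h1 h2) => E [e [He [Hmono Hfac]]].
case: (Hfac _ _ Ea) => a' Ha; case: (Hfac _ _ Eb) => b' Hb.
case: (J E e a' b' Hmono Ha Hb) => e' [_ Hee'].
by rewrite -(comp_id_r h1) -(comp_id_r h2) -Hee' !comp_assoc He.
Qed.

End Pullbacks.

Section PointPullbacks.
Variable C : Category.

Lemma Pt_pullback (p q r w : Point C) (F : PtHom p r) (G : PtHom q r)
    (P1 : PtHom w p) (P2 : PtHom w q) :
  is_pullback (ph_top F) (ph_top G) (ph_top P1) (ph_top P2) ->
  is_pullback (ph_bot F) (ph_bot G) (ph_bot P1) (ph_bot P2) ->
  is_pullback (C := Pt C) F G P1 P2.
Proof.
move=> Htop Hbot; split.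
  by apply: PtHom_eq => /=; [exact: Htop.1 | exact: Hbot.1].
move=> v Q1 Q2 EQ.
have [/= Et Eb] := (f_equal ph_top EQ, f_equal ph_bot EQ).
case: (pullback_lift Htop Et) => ut [U1 U2].
case: (pullback_lift Hbot Eb) => ub [B1 B2].
have Uf : pt_f w ∘ ut = ub ∘ pt_f v.
  apply: (pullback_jointly_mono Hbot).
  - by rewrite !comp_assoc -(ph_f P1) B1 -comp_assoc U1 (ph_f Q1).
  - by rewrite !comp_assoc -(ph_f P2) B2 -comp_assoc U2 (ph_f Q2).
have Us : ut ∘ pt_s v = pt_s w ∘ ub.
  apply: (pullback_jointly_mono Htop).
  - by rewrite !comp_assoc U1 (ph_s Q1) (ph_s P1) -comp_assoc B1.
  - by rewrite !comp_assoc U2 (ph_s Q2) (ph_s P2) -comp_assoc B2.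
exists (Build_PtHom Uf Us); split; first by split; apply: PtHom_eq.
move=> V V1 V2; apply: PtHom_eq => /=.
- by apply: (pullback_jointly_mono Htop); [rewrite U1 -V1 | rewrite U2 -V2].
- by apply: (pullback_jointly_mono Hbot); [rewrite B1 -V1 | rewrite B2 -V2].
Qed.

Lemma kernel_pair_point_in_class (S : Point C -> Prop)
    (HS : closed_under_finite_limits (C := Pt C) S) (A B Y R : C)
    (fa : Hom A Y) (sa : Hom Y A) (ha : fa ∘ sa = idm Y)
    (fb : Hom B Y) (sb : Hom Y B) (hb : fb ∘ sb = idm Y)
    (phi : Hom A B) (Hf : fb ∘ phi = fa) (Hs : phi ∘ sa = sb)
    (r1 r2 : Hom R A) (HR : is_pullback phi phi r1 r2) (sR : Hom Y R)
    (H1 : r1 ∘ sR = sa) (H2 : r2 ∘ sR = sa) (hR : (fa ∘ r1) ∘ sR = idm Y) :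
  S (Build_Point fa sa ha) -> S (Build_Point fb sb hb) ->
  S (Build_Point (fa ∘ r1) sR hR).
Proof.
move=> Sa Sb.
have F1 : fb ∘ phi = idm Y ∘ fa by rewrite comp_id_l.
have F2 : phi ∘ sa = sb ∘ idm Y by rewrite comp_id_r.
have G1 : fa ∘ r1 = idm Y ∘ (fa ∘ r1) by rewrite comp_id_l.
have G2 : fa ∘ r2 = idm Y ∘ (fa ∘ r1) by rewrite comp_id_l -Hf -!comp_assoc HR.1.
have K1 : r1 ∘ sR = sa ∘ idm Y by rewrite comp_id_r.
have K2 : r2 ∘ sR = sa ∘ idm Y by rewrite comp_id_r.
set pa := Build_Point fa sa ha; set pb := Build_Point fb sb hb.
set pr := Build_Point (fa ∘ r1) sR hR.
pose Phi := Build_PtHom (p := pa) (q := pb) F1 F2.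
pose L1 := Build_PtHom (p := pr) (q := pa) G1 K1.
pose L2 := Build_PtHom (p := pr) (q := pa) G2 K2.
have Hpb : is_pullback (C := Pt C) Phi Phi L1 L2 :=
  Pt_pullback (F := Phi) (G := Phi) (P1 := L1) (P2 := L2) HR (pullback_id Y).
exact: (closed_under_pullbacks HS Hpb Sa Sa Sb).
Qed.

End PointPullbacks.

Section ReflexiveGraphs.
Variables (C : Category) (S : Point C -> Prop).
Hypotheses (Hfc : finitely_complete C) (Hfib : fibrational S)
  (Hlim : closed_under_finite_limits (C := Pt C) S) (HM : sigma_maltsev S).
Variables (X1 X0 : C) (d0 d1 : Hom X1 X0) (s0 : Hom X0 X1).
Hypotheses (Hd0s0 : d0 ∘ s0 = idm X0) (Hd1s0 : d1 ∘ s0 = idm X0).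
Variables (X1' X0' : C) (d0' d1' : Hom X1' X0') (s0' : Hom X0' X1').
Hypothesis (Hd1s0' : d1' ∘ s0' = idm X0').
Variables (g1 : Hom X1 X1') (t1 : Hom X1' X1) (g0 : Hom X0 X0') (t0 : Hom X0' X0).
Hypotheses (Hg1 : g1 ∘ t1 = idm X1') (Hg0 : g0 ∘ t0 = idm X0').
Hypotheses (Hgd0 : g0 ∘ d0 = d0' ∘ g1) (Hgs0 : g1 ∘ s0 = s0' ∘ g0)
  (Htd0 : t0 ∘ d0' = d0 ∘ t1) (Htd1 : t0 ∘ d1' = d1 ∘ t1).
Hypotheses (HSg0 : S (Build_Point g0 t0 Hg0)) (Hpb0 : is_pullback g0 d0' d0 g1).

Variables (P : C) (pi1 : Hom P X1') (pi2 : Hom P X0) (phi : Hom X1 P).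
Hypotheses (HP : is_pullback d1' g0 pi1 pi2)
  (Hphi1 : pi1 ∘ phi = g1) (Hphi2 : pi2 ∘ phi = d1).

Lemma point_g1_in_class : S (Build_Point g1 t1 Hg1).
Proof.
exact: (Hfib.2 (Build_Point g0 t0 Hg0) (Build_Point g1 t1 Hg1) d0' d0 HSg0
  (pullback_sym Hpb0) (esym Htd0)).
Qed.

Lemma comparison_t1_sec : pi1 ∘ (phi ∘ t1) = idm X1'.
Proof. by rewrite comp_assoc Hphi1 Hg1. Qed.

Lemma comparison_t1_d1 : pi2 ∘ (phi ∘ t1) = t0 ∘ d1'.
Proof. by rewrite comp_assoc Hphi2 Htd1. Qed.

Lemma comparison_point_in_class : S (Build_Point pi1 (phi ∘ t1) comparison_t1_sec).
Proof.
exact: (Hfib.2 (Build_Point g0 t0 Hg0) (Build_Point pi1 _ comparison_t1_sec) d1' pi2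
  HSg0 HP comparison_t1_d1).
Qed.

Section KernelPair.
Variables (R : C) (r1 r2 : Hom R X1) (sR : Hom X1' R).
Hypotheses (HR : is_pullback phi phi r1 r2) (Hr1 : r1 ∘ sR = t1) (Hr2 : r2 ∘ sR = t1).

Lemma kernel_pair_sec : (g1 ∘ r1) ∘ sR = idm X1'.
Proof. by rewrite -comp_assoc Hr1 Hg1. Qed.

Lemma kernel_pair_in_class : S (Build_Point (g1 ∘ r1) sR kernel_pair_sec).
Proof.
exact: (kernel_pair_point_in_class Hlim Hphi1 erefl HR Hr1 Hr2 kernel_pair_sec
  point_g1_in_class comparison_point_in_class).
Qed.

Lemma kernel_pair_g1 : g1 ∘ r1 = g1 ∘ r2.
Proof. by rewrite -Hphi1 -!comp_assoc HR.1. Qed.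

Lemma kernel_pair_d1 : d1 ∘ r1 = d1 ∘ r2.
Proof. by rewrite -Hphi2 -!comp_assoc HR.1. Qed.

Variables (N : C) (n1 n2 : Hom N X1) (tN : Hom X1' N).
Hypotheses (HN : is_pullback d0 d0 n1 n2) (Hn1 : n1 ∘ tN = t1) (Hn2 : n2 ∘ tN = t1).
Variables (X' : C) (q1 : Hom X' N) (q2 : Hom X' R).
Hypothesis (HX : is_pullback (g1 ∘ n2) (g1 ∘ r1) q1 q2).

Definition twisted (r : Hom R X1) (m : Hom X' X1) : Prop :=
  d0 ∘ m = d0 ∘ (r ∘ q2) /\ g1 ∘ m = g1 ∘ (n1 ∘ q1).

Lemma twisted_exists (r : Hom R X1) : g1 ∘ r = g1 ∘ r1 -> exists m, twisted r m.
Proof.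
move=> Hr; apply: pullback_lift Hpb0 _.
have -> : g0 ∘ (d0 ∘ (r ∘ q2)) = d0' ∘ ((g1 ∘ r) ∘ q2) by rewrite !comp_assoc Hgd0.
rewrite Hr -HX.1 !comp_assoc -Hgd0 -(comp_assoc g0 d0 n2) -HN.1.
by rewrite comp_assoc.
Qed.

Lemma twisted_d1 (m1 m2 : Hom X' X1) :
  twisted r1 m1 -> twisted r2 m2 -> d1 ∘ m1 = d1 ∘ m2.
Proof.
move=> [M1 M1'] [M2 M2'].
have HgtN : (g1 ∘ n2) ∘ tN = idm X1' by rewrite -comp_assoc Hn2 Hg1.
have [sX [S1 S2]] : exists sX : Hom N X', q1 ∘ sX = idm N /\ q2 ∘ sX = sR ∘ (g1 ∘ n2).
  by apply: pullback_lift HX _; rewrite comp_id_r comp_assoc kernel_pair_sec comp_id_l.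
have [tX [T1 T2]] : exists tX : Hom R X', q1 ∘ tX = tN ∘ (g1 ∘ r1) /\ q2 ∘ tX = idm R.
  by apply: pullback_lift HX _; rewrite comp_assoc HgtN comp_id_l comp_id_r.
have J := HM kernel_pair_in_class HgtN HX S1 S2 T1 T2.
have m_tX r m : g1 ∘ r = g1 ∘ r1 -> twisted r m -> m ∘ tX = r.
  move=> Hr [Md0 Mg1]; apply: (pullback_jointly_mono Hpb0).
  - by rewrite comp_assoc Md0 -!comp_assoc T2 comp_id_r.
  - rewrite comp_assoc Mg1 -!comp_assoc T1 (comp_assoc n1) Hn1.
    by rewrite (comp_assoc g1) Hg1 comp_id_l Hr.
apply: (jointly_extremally_epic_eq Hfc J); rewrite -!comp_assoc.
- congr (d1 ∘ _); apply: (pullback_jointly_mono Hpb0).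
  + rewrite !comp_assoc M1 M2 -!comp_assoc S2.
    by rewrite (comp_assoc r1) (comp_assoc r2) Hr1 Hr2.
  + by rewrite !comp_assoc M1' M2'.
- by rewrite (m_tX r1 m1) // (m_tX r2 m2) -?kernel_pair_g1 // kernel_pair_d1.
Qed.

Lemma twisted_diagonal :
  exists z : Hom R X',
    forall r m, g1 ∘ r = g1 ∘ r1 -> twisted r m -> m ∘ z = s0 ∘ (d0 ∘ r).
Proof.
have [nu [nu1 nu2]] : exists nu : Hom R N, n1 ∘ nu = s0 ∘ (d0 ∘ r2) /\ n2 ∘ nu = r2.
  by apply: pullback_lift HN _; rewrite comp_assoc Hd0s0 comp_id_l.
have [z [z1 z2]] : exists z : Hom R X', q1 ∘ z = nu /\ q2 ∘ z = idm R.
  by apply: pullback_lift HX _; rewrite -comp_assoc nu2 comp_id_r kernel_pair_g1.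
exists z => r m Hr [Md0 Mg1]; apply: (pullback_jointly_mono Hpb0).
- by rewrite comp_assoc Md0 -!comp_assoc z2 comp_id_r comp_assoc Hd0s0 comp_id_l.
- rewrite comp_assoc Mg1 -!comp_assoc z1 nu1 !comp_assoc Hgs0 -!comp_assoc.
  by rewrite (comp_assoc g0) Hgd0 (comp_assoc g0) Hgd0 -!comp_assoc Hr kernel_pair_g1.
Qed.

Lemma kernel_pair_d0 : d0 ∘ r1 = d0 ∘ r2.
Proof.
have [m1 Hm1] := twisted_exists erefl.
have [m2 Hm2] := twisted_exists (esym kernel_pair_g1).
have [z Hz] := twisted_diagonal.
have d0_r r m : g1 ∘ r = g1 ∘ r1 -> twisted r m -> d0 ∘ r = d1 ∘ (m ∘ z).
  by move=> Hr Hm; rewrite (Hz r m) // comp_assoc Hd1s0 comp_id_l.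
rewrite (d0_r r1 m1) // (d0_r r2 m2 (esym kernel_pair_g1)) //.
by rewrite !comp_assoc (twisted_d1 Hm1 Hm2).
Qed.

End KernelPair.

Lemma comparison_mono : is_mono phi.
Proof.
move=> W u v Euv.
have [R [r1 [r2 HR]]] := pullback_exists Hfc phi phi.
have [sR [Hr1 Hr2]] := pullback_lift HR (erefl (phi ∘ t1)).
have [N [n1 [n2 HN]]] := pullback_exists Hfc d0 d0.
have [tN [Hn1 Hn2]] := pullback_lift HN (erefl (d0 ∘ t1)).
have [X' [q1 [q2 HX]]] := pullback_exists Hfc (g1 ∘ n2) (g1 ∘ r1).
have Hd0 := kernel_pair_d0 HR Hr1 Hr2 HN Hn1 Hn2 HX.
have [w [<- <-]] := pullback_lift HR Euv.
by apply: (pullback_jointly_mono Hpb0); rewrite !comp_assoc ?Hd0 ?(kernel_pair_g1 HR).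
Qed.

Lemma comparison_iso : is_iso phi.
Proof.
have Hs01 : pi1 ∘ (phi ∘ s0) = s0' ∘ g0 by rewrite comp_assoc Hphi1 Hgs0.
have Hs02 : pi2 ∘ (phi ∘ s0) = idm X0 by rewrite comp_assoc Hphi2 Hd1s0.
have J := HM HSg0 Hd1s0' HP comparison_t1_sec comparison_t1_d1 Hs01 Hs02.
exact: J X1 phi t1 s0 comparison_mono erefl erefl.
Qed.

End ReflexiveGraphs.

Theorem proposition6p1 (C : Category) (S : Point C -> Prop)
  (Hfc : finitely_complete C) (HS : point_congruous S) (HM : sigma_maltsev S)
  (X1 X0 : C) (d0 d1 : Hom X1 X0) (s0 : Hom X0 X1)
  (Hd0s0 : d0 ∘ s0 = idm X0) (Hd1s0 : d1 ∘ s0 = idm X0)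
  (X1' X0' : C) (d0' d1' : Hom X1' X0') (s0' : Hom X0' X1')
  (Hd0s0' : d0' ∘ s0' = idm X0') (Hd1s0' : d1' ∘ s0' = idm X0')
  (g1 : Hom X1 X1') (t1 : Hom X1' X1) (Hg1 : g1 ∘ t1 = idm X1')
  (g0 : Hom X0 X0') (t0 : Hom X0' X0) (Hg0 : g0 ∘ t0 = idm X0')
  (Hgd0 : g0 ∘ d0 = d0' ∘ g1) (Hgd1 : g0 ∘ d1 = d1' ∘ g1) (Hgs0 : g1 ∘ s0 = s0' ∘ g0)
  (Htd0 : t0 ∘ d0' = d0 ∘ t1) (Htd1 : t0 ∘ d1' = d1 ∘ t1) (Hts0 : t1 ∘ s0' = s0 ∘ t0)
  (HSg0 : S (Build_Point g0 t0 Hg0))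
  (Hpb0 : is_pullback g0 d0' d0 g1) :
  is_pullback g0 d1' d1 g1.
Proof.
case: HS => Hfib Hlim.
have [P [pi1 [pi2 HP]]] := pullback_exists Hfc d1' g0.
have [phi [Hphi1 Hphi2]] := pullback_lift HP (esym Hgd1).
have Hiso := comparison_iso Hfc Hfib Hlim HM Hd0s0 Hd1s0 Hd1s0' Hg1 Hgd0 Hgs0 Htd0 Htd1
  HSg0 Hpb0 HP Hphi1 Hphi2.
rewrite -Hphi1 -Hphi2; exact: pullback_iso (pullback_sym HP) Hiso.
Qed.
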